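(* Let $\boldsymbol{\alpha}=(\alpha_1,\dots,\alpha_d)\in\mathbb{R}^d$ be such that $1,\alpha_1,\ldots,\alpha_d$ form a $\mathbb{Q}$-basis for an algebraic number field $K\subseteq\mathbb{R}$, let $\Lambda=\mathbb{Z}+\alpha_1\mathbb{Z}+\cdots+\alpha_d\mathbb{Z}$, and let $s\in\Lambda^*$. For $u\in\mathcal{Z}_\Lambda^\times$ define $q_u=\mathrm{Tr}(su)\in\mathbb{Z}$ and $\boldsymbol{p}_u\in\mathbb{Z}^d$ by $p_{u,i}=\mathrm{Tr}(su\alpha_i)$ for $1\le i\le d$. Then there is an invertible real $d\times d$ matrix $M(\boldsymbol{\alpha})$, depending only on $\boldsymbol{\alpha}$, such that for each $u\in\mathcal{Z}_\Lambda^\times$ there exist $\gamma_u\in\mathbb{R}$ and $\boldsymbol{\beta}_u\in\mathbb{R}^d$ with \[|q_u|^{1/d}(q_u\boldsymbol{\alpha}-\boldsymbol{p}_u)=\gamma_u\boldsymbol{\beta}_uM(\boldsymbol{\alpha}),\] where $\boldsymbol{\beta}_u$ (a row vector) lies on the surface in $\mathbb{R}^d$ with equation \[|x_1\cdots x_r|\prod_{i=1}^m\left(x_{r+2i-1}^2+x_{r+2i}^2\right)=1,\] and where $\gamma_u\to|\mathrm{N}(s)|^{1/d}$ as $u$ tends to infinity along any sequence of dominant units.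
   Context: $[K:\mathbb{Q}]=d+1$; $K$ has $r+1$ real embeddings $\sigma_0=\mathrm{id},\sigma_1,\dots,\sigma_r$ and $2m$ non-real embeddings $\sigma_{r+1},\dots,\sigma_d$ with $\sigma_{r+i}=\overline{\sigma_{r+m+i}}$ ($1\le i\le m$), so $d=r+2m$. $\mathrm{N},\mathrm{Tr}$ are norm and trace $K\to\mathbb{Q}$. $\Lambda^*=\{x\in K:\mathrm{Tr}(xy)\in\mathbb{Z}\ \forall y\in\Lambda\}$ is the dual lattice with respect to the trace form. $\mathcal{O}_K$ is the ring of integers, $\mathcal{Z}_\Lambda=\{\gamma\in\mathcal{O}_K:\gamma\Lambda\subseteq\Lambda\}$ with unit group $\mathcal{Z}_\Lambda^\times$. The logarithmic embedding $\varphi(x)=(\log|\sigma_0(x)|,\dots,\log|\sigma_{r+m}(x)|)$ maps $\mathcal{Z}_\Lambda^\times$ onto a lattice in the hyperplane $x_0+\cdots+x_r+2x_{r+1}+\cdots+2x_{r+m}=0$ of $\mathbb{R}^{r+m+1}$; $\kappa_\Lambda>1$ is the infimum of all $\kappa>1$ such that every closed cube of side $\log\kappa$ centered on this hyperplane contains a point of $\varphi(\mathcal{Z}_\Lambda^\times)$. A dominant unit is $u\in\mathcal{Z}_\Lambda^\times$ such that for some $t>1$, $t\le|u|\le\kappa_\Lambda t$ and $t^{-1/d}\le|\sigma_i(u)|\le\kappa_\Lambda t^{-1/d}$ for $1\le i\le d$; ''$u$ tends to infinity'' means $|u|\to\infty$. *)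

From HB Require Import structures.
From mathcomp Require Import all_boot all_order all_algebra.
From mathcomp Require Import falgebra fieldext.
From mathcomp Require Import complex.
From mathcomp Require Import boolp classical_sets reals exp topology normedtype sequences.

Set Implicit Arguments.
Unset Strict Implicit.
Unset Printing Implicit Defensive.

Import Order.TTheory GRing.Theory Num.Theory.
Local Open Scope ring_scope.

Section NumberFieldDefs.
Variable L : fieldExtType rat.

Definition ftrace (x : L) : rat :=
  \tr (passmx.mxof (vbasis fullv) (vbasis fullv) (amull x)).
Definition fnorm (x : L) : rat :=
  \det (passmx.mxof (vbasis fullv) (vbasis fullv) (amull x)).

Definition is_alg_int (x : L) : Prop :=
  exists p : {poly int}, p \is monic /\ root (map_poly (fun z : int => z%:~R) p) x.

Variables (d : nat) (alpha : 'I_d -> L).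

Definition in_lattice (x : L) : Prop :=
  exists (c0 : int) (c : 'I_d -> int), x = c0%:~R + \sum_(i < d) (c i)%:~R * alpha i.

Definition in_dual (s : L) : Prop :=
  forall y, in_lattice y -> ftrace (s * y) \is a Num.int.

Definition in_ZL (g : L) : Prop :=
  is_alg_int g /\ forall y, in_lattice y -> in_lattice (g * y).

Definition unit_ZL (u : L) : Prop :=
  in_ZL u /\ exists v, in_ZL v /\ u * v = 1.

Variable R : realType.

Definition cabs (z : R[i]) : R := Num.sqrt (complex.Re z ^+ 2 + complex.Im z ^+ 2).

Variables (sigma : 'I_d.+1 -> {rmorphism L -> R[i]}) (r m : nat).

Definition logemb (x : L) : 'I_(r + m).+1 -> R :=
  fun j => ln (cabs (sigma (inord j) x)).

Definition in_hyperplane (c : 'I_(r + m).+1 -> R) : Prop :=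
  \sum_(j < (r + m).+1) (if (j <= r)%N then 1 else 2) * c j = 0.

Definition kappa : R :=
  inf [set k : R | 1 < k /\
        forall c, in_hyperplane c ->
          exists u, unit_ZL u /\
            forall j, `|logemb u j - c j| <= ln k / 2].

(* |u| = |sigma_0 u| (K is viewed inside R via sigma_0 = id) *)
Definition rabs (x : L) : R := cabs (sigma ord0 x).

Definition dominant (u : L) : Prop :=
  unit_ZL u /\
  exists t : R, 1 < t /\ t <= rabs u <= kappa * t /\
    forall i : 'I_d.+1, (0 < i)%N ->
      powR t (- (d%:R)^-1) <= cabs (sigma i u) <= kappa * powR t (- (d%:R)^-1).

End NumberFieldDefs.

Definition rcoord (R : pzRingType) (n : nat) (x : 'rV[R]_n) (k : nat) : R :=
  if insub k is Some i then x ord0 i else 0.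

(* the surface |x_1 ... x_r| prod_(i=1..m) (x_(r+2i-1)^2 + x_(r+2i)^2) = 1
   (written with 0-based coordinates) *)
Definition on_surface (R : realType) (n r m : nat) (x : 'rV[R]_n) : Prop :=
  `| \prod_(j < r) rcoord x j | *
    \prod_(i < m) (rcoord x (r + 2 * i) ^+ 2 + rcoord x (r + 2 * i + 1) ^+ 2) = 1.

(* Write [y_j] for [sigma_j (s u)], so that [q_u = \sum_j y_j] and
   [p_(u,i) = \sum_j y_j sigma_j(alpha_i)].  Then
   [q_u alpha_i - p_(u,i) = \sum_(j >= 1) y_j (alpha_i - sigma_j(alpha_i))], and pairing
   each non-real embedding with its conjugate rewrites this as [y M(alpha)], where
   [y] lists the real and imaginary parts of [y_1, ..., y_d] and [M(alpha)] is real;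
   [M(alpha)] is invertible by Dedekind's independence of the embeddings.  The
   surface function of [y] is [\prod_(j >= 1) |y_j| = |N(s)| / |s u|] since
   [N(u) = +-1], so [gamma_u = (|q_u| |N(s)| / |s u|)^(1/d)] and
   [beta_u = |q_u|^(1/d) y / gamma_u] do the job.  For a dominant unit the conjugates
   [sigma_j(u)], [j >= 1], are bounded by [kappa], so [q_u - s u] stays bounded while
   [|s u| -> oo]; hence [|q_u| / |s u| -> 1] and [gamma_u -> |N(s)|^(1/d)]. *)

From HB Require Import structures.
From mathcomp Require Import all_boot all_order all_algebra.
From mathcomp Require Import falgebra fieldext.
From mathcomp Require Import complex.
From mathcomp Require Import boolp classical_sets reals exp topology normedtype sequences.
From mathcomp Require Import ring lra zify.

Set Implicit Arguments.
Unset Strict Implicit.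
Unset Printing Implicit Defensive.

Import Order.TTheory GRing.Theory Num.Theory.
Import numFieldNormedType.Exports.
Local Open Scope ring_scope.

Section Dedekind.
Variables (L : nzRingType) (F : fieldType) (n : nat).
Variable f : 'I_n -> {rmorphism L -> F}.
Hypothesis f_distinct : forall i j, f i =1 f j -> i = j.

(* Induction on the size of the support of [z]: if [z j] and [z b] are nonzero,
   pick [y] with [f j y != f b y]; the coefficients [z i * (f i y - f b y)] give a
   relation with smaller support (it misses [b]) that still involves [j]. *)
Lemma dedekind_independence (z : 'I_n -> F) :
  (forall x, \sum_i z i * f i x = 0) -> forall j, z j = 0.
Proof.
move: {2}#|_| (leqnn #|[set i | z i != 0]|) => k.
elim: k z => [|k IHk] z supp_z hz j.
  apply/eqP; apply: contraTT supp_z => zj.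
  by rewrite -ltnNge; apply/card_gt0P; exists j; rewrite inE.
apply/eqP/negP => /negP zj.
have [[b zb bj]|no_b] := pselect (exists2 b, z b != 0 & b != j); last first.
  move/eqP: zj; apply; rewrite -(hz 1) (bigD1 j) //= big1 ?rmorph1 ?mulr1 ?addr0 //.
  move=> i ij; case: (eqVneq (z i) 0) => [-> | zi]; first by rewrite mul0r.
  by case: no_b; exists i.
have [y fjby] : exists y, f j y != f b y.
  apply/not_existsP => fjb_eq; move/eqP: bj; apply; apply/esym/f_distinct => x.
  by apply/eqP/negPn/negP; exact: fjb_eq.
pose z' i := z i * (f i y - f b y).
have supp_z' : (#|[set i | z' i != 0%R]| <= k)%N.
  have sub : [set i | z' i != 0%R] \subset [set i | z i != 0%R] :\ b.
    apply/fintype.subsetP => i; rewrite !inE /z' mulf_eq0 negb_or subr_eq0 => /andP[zi fib].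
    by rewrite zi andbT; apply: contraNneq fib => ->.
  rewrite -ltnS; apply: leq_trans supp_z.
  by rewrite (cardsD1 b [set i | z i != 0%R]) inE zb ltnS subset_leq_card.
have hz' x : \sum_i z' i * f i x = 0.
  transitivity (\sum_i z i * f i (y * x) - f b y * \sum_i z i * f i x).
    by rewrite mulr_sumr -sumrB; apply: eq_bigr => i _; rewrite rmorphM /z'; ring.
  by rewrite !hz mulr0 subr0.
move/eqP: (IHk z' supp_z' hz' j); rewrite mulf_eq0 subr_eq0 (negPf fjby) orbF.
exact/negP.
Qed.

End Dedekind.

Lemma rmorphZ_rat (L : fieldExtType rat) (F : numFieldType) (f : {rmorphism L -> F})
  (a : rat) (x : L) : f (a *: x) = ratr a * f x.
Proof.
by rewrite -mulr_algl rmorphM; congr (_ * _); exact: (fmorph_eq_rat (f \o in_alg L)).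
Qed.

Section Embeddings.
Variables (L : fieldExtType rat) (F : numFieldType) (n : nat).
Variable sigma : 'I_n -> {rmorphism L -> F}.
Hypothesis sigma_distinct : forall i j, sigma i =1 sigma j -> i = j.
Variable e : seq L.
Hypothesis e_basis : basis_of fullv e.
Hypothesis size_e : size e = n.

Lemma dedekind_basis (z : 'I_n -> F) :
  (forall k, (k < n)%N -> \sum_j z j * sigma j e`_k = 0) -> forall j, z j = 0.
Proof.
move=> ze; apply: (dedekind_independence sigma_distinct) => x.
have eb : basis_of fullv (in_tuple e) by [].
rewrite (coord_basis eb (memvf x)).
under eq_bigr => j _ do rewrite rmorph_sum mulr_sumr.
rewrite exchange_big /= big1 // => k _.
under eq_bigr => j _ do rewrite rmorphZ_rat mulrCA.
by rewrite -mulr_sumr ze ?mulr0 // -size_e.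
Qed.

Definition embedding_mx : 'M[F]_n := \matrix_(k, j) sigma j e`_k.

Lemma embedding_mx_unit : embedding_mx \in unitmx.
Proof.
rewrite -unitmx_tr -row_free_unit -kermx_eq0; apply/eqP.
move: (kermx _) (mulmx_ker embedding_mx^T) => K ker_K.
apply/matrixP => a b; rewrite [RHS]mxE; move: b; apply: dedekind_basis => k lt_kn.
have := congr1 (fun M : 'M[F]_n => M a (Ordinal lt_kn)) ker_K.
by rewrite !mxE => {2}<-; apply: eq_bigr => j _; rewrite !mxE.
Qed.

Lemma mulr_mx_diagonalized (x : L) (A : 'M[rat]_n) :
  (forall i : 'I_n, x * e`_i = \sum_k A i k *: e`_k) ->
  map_mx ratr A = embedding_mx *m diag_mx (\row_j sigma j x) *m invmx embedding_mx.
Proof.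
move=> A_mulr; apply: canRL (mulmxK embedding_mx_unit) _; apply/matrixP => i j.
rewrite mul_mx_diag !mxE -rmorphM mulrC A_mulr rmorph_sum.
by apply: eq_bigr => k _; rewrite !mxE rmorphZ_rat.
Qed.

(* The separate size [k] accommodates the matrices behind [ftrace] and [fnorm],
   whose size [\dim fullv] is only propositionally equal to [n]. *)
Lemma det_mulr_embeddings k (A : 'M[rat]_k) (x : L) : k = n ->
  (forall i : 'I_k, x * e`_i = \sum_j A i j *: e`_j) -> ratr (\det A) = \prod_j sigma j x.
Proof.
move=> kn A_mulr; subst k.
rewrite -det_map_mx (mulr_mx_diagonalized A_mulr) !det_mulmx det_inv det_diag.
rewrite mulrC mulrA mulVr ?mul1r -?unitmxE ?embedding_mx_unit //.
by apply: eq_bigr => j _; rewrite mxE.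
Qed.

Lemma trace_mulr_embeddings k (A : 'M[rat]_k) (x : L) : k = n ->
  (forall i : 'I_k, x * e`_i = \sum_j A i j *: e`_j) -> ratr (\tr A) = \sum_j sigma j x.
Proof.
move=> kn A_mulr; subst k.
rewrite -trace_map_mx (mulr_mx_diagonalized A_mulr) mxtrace_mulC mulKmx ?embedding_mx_unit //.
by rewrite mxtrace_diag; apply: eq_bigr => j _; rewrite mxE.
Qed.

End Embeddings.

Section ConjugatePairs.
Variables (r m : nat).

Lemma big_nat_pairs (T : Type) (idx : T) (op : Monoid.com_law idx) (F : nat -> T) :
  \big[op/idx]_(0 <= l < 2 * m) F l =
  \big[op/idx]_(0 <= k < m) op (F (2 * k)%N) (F (2 * k + 1)%N).
Proof.
elim: m => [|n IHn]; first by rewrite !big_geq.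
rewrite [RHS]big_nat_recr //= -IHn.
have -> : (2 * n.+1 = (2 * n).+1.+1)%N by lia.
by rewrite big_nat_recr //= big_nat_recr //= Monoid.mulmA addn1.
Qed.

Lemma big_ord_split_pairs (T : Type) (idx : T) (op : Monoid.com_law idx) (F : nat -> T) :
  \big[op/idx]_(l < r + 2 * m) F l =
  op (\big[op/idx]_(l < r) F l)
     (\big[op/idx]_(k < m) op (F (r + 2 * k)%N) (F (r + 2 * k + 1)%N)).
Proof.
rewrite -!(big_mkord xpredT F).
rewrite -(big_mkord xpredT (fun k => op (F (r + 2 * k)%N) (F (r + 2 * k + 1)%N))).
rewrite (@big_cat_nat _ _ op r 0) ?leq_addr //=; congr (op _ _).
rewrite -{1}(add0n r) big_addn addnC addnK big_nat_pairs.
by apply: eq_bigr => k _; rewrite !(addnC _ r) addnA.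
Qed.

Lemma big_nat_split_conj (T : Type) (idx : T) (op : Monoid.com_law idx) (F : nat -> T) :
  \big[op/idx]_(1 <= j < (r + 2 * m).+1) F j =
  op (\big[op/idx]_(l < r) F l.+1)
     (\big[op/idx]_(k < m) op (F (r + k).+1) (F (r + m + k).+1)).
Proof.
rewrite (@big_cat_nat _ _ op r.+1 1 (r + 2 * m).+1); [|lia|lia].
rewrite (@big_cat_nat _ _ op (r + m).+1 r.+1 (r + 2 * m).+1); [|lia|lia].
rewrite -(big_mkord xpredT (fun l => F l.+1)).
rewrite -(big_mkord xpredT (fun k => op (F (r + k).+1) (F (r + m + k).+1))).
rewrite big_split /=; congr (op _ (op _ _)).
- by rewrite -{1}(add0n 1%N) big_addn subn1; apply: eq_bigr => l _; rewrite addn1.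
- rewrite -{1}(add0n r.+1) big_addn (_ : (r + m).+1 - r.+1 = m)%N; last by lia.
  by apply: eq_bigr => k _; rewrite addnS addnC.
- rewrite -{1}(add0n (r + m).+1) big_addn (_ : (r + 2 * m).+1 - (r + m).+1 = m)%N; last by lia.
  by apply: eq_bigr => k _; rewrite addnS addnC.
Qed.

End ConjugatePairs.

Section ComplexModulus.
Variable R : realType.
Implicit Types z w : R[i].

Lemma real_complexD (x y : R) : (x + y)%:C%C = x%:C%C + y%:C%C.
Proof. exact: rmorphD. Qed.

Lemma real_complexM (x y : R) : (x * y)%:C%C = x%:C%C * y%:C%C.
Proof. exact: rmorphM. Qed.

Lemma cabsE z : (cabs z)%:C%C = `|z|.
Proof. by rewrite normc_def. Qed.

Lemma cabs_ge0 z : 0 <= cabs z.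
Proof. exact: sqrtr_ge0. Qed.

Lemma cabsM z w : cabs (z * w) = cabs z * cabs w.
Proof. by apply: complexI; rewrite real_complexM !cabsE normrM. Qed.

Lemma cabsD z w : cabs (z + w) <= cabs z + cabs w.
Proof. by rewrite -lecR real_complexD !cabsE ler_normD. Qed.

Lemma cabs_eq0 z : (cabs z == 0) = (z == 0).
Proof. by rewrite -(inj_eq (@complexI R)) cabsE normr_eq0. Qed.

Lemma cabs_real z : complex.Im z = 0 -> cabs z = `|complex.Re z|.
Proof. by rewrite /cabs => ->; rewrite expr0n addr0 sqrtr_sqr. Qed.

Lemma cabs0 : cabs (0 : R[i]) = 0.
Proof. by rewrite cabs_real // normr0. Qed.

Lemma cabs1 : cabs (1 : R[i]) = 1.
Proof. by rewrite cabs_real // normr1. Qed.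

Lemma cabsN z : cabs (- z) = cabs z.
Proof. by case: z => a b; rewrite /cabs /= !sqrrN. Qed.

Lemma cabsJ z : cabs z^*%C = cabs z.
Proof. by case: z => a b; rewrite /cabs /= sqrrN. Qed.

Lemma cabs_sqr z : cabs z ^+ 2 = complex.Re z ^+ 2 + complex.Im z ^+ 2.
Proof. by rewrite sqr_sqrtr // addr_ge0 // sqr_ge0. Qed.

Lemma cabs_sum (I : Type) (s : seq I) (P : pred I) (F : I -> R[i]) :
  cabs (\sum_(i <- s | P i) F i) <= \sum_(i <- s | P i) cabs (F i).
Proof.
elim/big_rec2: _ => [|i y1 y2 _ h]; first by rewrite cabs0.
exact: le_trans (cabsD _ _) (lerD (lexx _) h).
Qed.

Lemma cabs_prod (I : Type) (s : seq I) (P : pred I) (F : I -> R[i]) :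
  cabs (\prod_(i <- s | P i) F i) = \prod_(i <- s | P i) cabs (F i).
Proof. exact: (big_morph _ cabsM cabs1). Qed.

Lemma ImB z w : complex.Im (z - w) = complex.Im z - complex.Im w.
Proof. by case: z; case: w. Qed.

Lemma real_complex_ratr (a : rat) : (ratr a : R)%:C%C = ratr a.
Proof. exact: (fmorph_rat (real_complex R)). Qed.

Lemma Im0_Re z : complex.Im z = 0 -> z = (complex.Re z)%:C%C.
Proof. by case: z => a b /= ->. Qed.

Lemma conj_Im0 z : complex.Im z = 0 -> z^*%C = z.
Proof. by case: z => a b /= ->; rewrite oppr0. Qed.

End ComplexModulus.

Section RowCoordinates.
Variable R : pzRingType.

Lemma rcoord_ord n (x : 'rV[R]_n) (i : 'I_n) : rcoord x i = x 0 i.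
Proof. by rewrite /rcoord valK. Qed.

Lemma rcoord_row n (g : nat -> R) k :
  rcoord (\row_(l < n) g l) k = if (k < n)%N then g k else 0.
Proof.
by rewrite /rcoord; case: ifP => lt_kn; [rewrite insubT /= mxE | rewrite insubF].
Qed.

Lemma rcoordZ n (a : R) (x : 'rV[R]_n) k : rcoord (a *: x) k = a * rcoord x k.
Proof. by rewrite /rcoord; case: insubP => [i _ _|_]; rewrite ?mxE ?mulr0. Qed.

End RowCoordinates.

Section RealCoordinates.
Variables (R : realType) (r m : nat).

(* A sequence [c : nat -> R[i]] stands for [c_1, ..., c_(r+2m)] (index 0 is
   ignored), with [c_(r+m+k)] the conjugate of [c_(r+k)].  Its real coordinates
   are [c_1, ..., c_r] followed by the real and imaginary parts of [c_(r+1)],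
   ..., [c_(r+m)]; [dual_coord] is scaled so that pairing real coordinates
   computes [\sum_j c_j w_j] (see [real_coord_pairing]). *)
Definition real_coord (c : nat -> R[i]) (l : nat) : R :=
  if (l < r)%N then complex.Re (c l.+1)
  else if odd (l - r) then complex.Im (c (r + (l - r)./2).+1)
  else complex.Re (c (r + (l - r)./2).+1).

Definition dual_coord (w : nat -> R[i]) (l : nat) : R :=
  if (l < r)%N then complex.Re (w l.+1)
  else if odd (l - r) then - 2 * complex.Im (w (r + (l - r)./2).+1)
  else 2 * complex.Re (w (r + (l - r)./2).+1).

Lemma real_coord_real c l : (l < r)%N -> real_coord c l = complex.Re (c l.+1).
Proof. by rewrite /real_coord => ->. Qed.

Lemma dual_coord_real w l : (l < r)%N -> dual_coord w l = complex.Re (w l.+1).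
Proof. by rewrite /dual_coord => ->. Qed.

Lemma pair_index_even k :
  [/\ (r + 2 * k < r)%N = false, odd (r + 2 * k - r) = false & ((r + 2 * k - r)./2 = k)%N].
Proof. by rewrite addKn mul2n odd_double doubleK; split => //; lia. Qed.

Lemma pair_index_odd k :
  [/\ (r + 2 * k + 1 < r)%N = false, odd (r + 2 * k + 1 - r) & ((r + 2 * k + 1 - r)./2 = k)%N].
Proof.
rewrite -addnA addKn mul2n addn1 /= odd_double uphalf_double; split => //; lia.
Qed.

Lemma real_coord_even c k : real_coord c (r + 2 * k) = complex.Re (c (r + k).+1).
Proof. by case: (pair_index_even k) => h1 h2 h3; rewrite /real_coord h1 h2 h3. Qed.

Lemma real_coord_odd c k : real_coord c (r + 2 * k + 1) = complex.Im (c (r + k).+1).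
Proof. by case: (pair_index_odd k) => h1 h2 h3; rewrite /real_coord h1 h2 h3. Qed.

Lemma dual_coord_even w k : dual_coord w (r + 2 * k) = 2 * complex.Re (w (r + k).+1).
Proof. by case: (pair_index_even k) => h1 h2 h3; rewrite /dual_coord h1 h2 h3. Qed.

Lemma dual_coord_odd w k : dual_coord w (r + 2 * k + 1) = - 2 * complex.Im (w (r + k).+1).
Proof. by case: (pair_index_odd k) => h1 h2 h3; rewrite /dual_coord h1 h2 h3. Qed.

Definition conj_symmetric (c : nat -> R[i]) :=
  (forall j, (0 < j <= r)%N -> complex.Im (c j) = 0) /\
  (forall k, (0 < k <= m)%N -> c (r + m + k)%N = (c (r + k)%N)^*%C).

Lemma real_coord_pairing c w : conj_symmetric c -> conj_symmetric w ->
  (\sum_(l < r + 2 * m) real_coord c l * dual_coord w l)%:C%C =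
  \sum_(1 <= j < (r + 2 * m).+1) c j * w j.
Proof.
move=> [c_real c_conj] [w_real w_conj].
rewrite (big_ord_split_pairs r m (@GRing.add R : Monoid.com_law 0)
  (fun l => real_coord c l * dual_coord w l)).
rewrite (big_nat_split_conj r m (@GRing.add R[i] : Monoid.com_law 0) (fun j => c j * w j)) /=.
rewrite real_complexD !rmorph_sum; congr (_ + _); apply: eq_bigr => l _ /=.
  have lt_lr := ltn_ord l; rewrite real_coord_real // dual_coord_real //.
  rewrite real_complexM -!Im0_Re ?c_real ?w_real //; lia.
rewrite real_coord_even real_coord_odd dual_coord_even dual_coord_odd.
have lt_lm := ltn_ord l; rewrite -!addnS c_conj ?w_conj; try lia.
case: (c _) => a b; case: (w _) => x y; apply/eqP.
by rewrite eq_complex /=; apply/andP; split; apply/eqP; ring.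
Qed.

(* The inverse of [real_coord] on conjugate-symmetric sequences. *)
Definition complex_coord n (x : 'rV[R]_n) (j : nat) : R[i] :=
  if j == 0%N then 0
  else if (j <= r)%N then (rcoord x j.-1)%:C%C
  else if (j <= r + m)%N then
    Complex (rcoord x (r + 2 * (j - r - 1))) (rcoord x (r + 2 * (j - r - 1) + 1))
  else (Complex (rcoord x (r + 2 * (j - r - m - 1)))
                (rcoord x (r + 2 * (j - r - m - 1) + 1)))^*%C.

Lemma complex_coord_pair n (x : 'rV[R]_n) k : (k < m)%N ->
  complex_coord x (r + k).+1 = Complex (rcoord x (r + 2 * k)) (rcoord x (r + 2 * k + 1)).
Proof.
move=> lt_km; rewrite /complex_coord /= ifF ?ifT; try lia.
by rewrite (_ : (r + k).+1 - r - 1 = k)%N //; lia.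
Qed.

Lemma complex_coord_conj_symmetric n (x : 'rV[R]_n) : conj_symmetric (complex_coord x).
Proof.
split=> [j j_small | k k_small]; first by rewrite /complex_coord ifF ?ifT //; lia.
rewrite (_ : r + k = (r + (k - 1)).+1)%N ?complex_coord_pair; try lia.
rewrite /complex_coord ifF ?ifF ?ifF; try lia.
by rewrite (_ : r + m + k - r - m - 1 = k - 1)%N //; lia.
Qed.

Lemma real_coord_complex_coord n (x : 'rV[R]_n) l : (l < r + 2 * m)%N ->
  real_coord (complex_coord x) l = rcoord x l.
Proof.
move=> lt_l; rewrite /real_coord; case: ifP => [lt_lr | /negbT].
  by rewrite /complex_coord ifT.
rewrite -leqNgt => le_rl; rewrite complex_coord_pair /=; last by lia.
case: ifP => odd_lr /=; congr rcoord; have := odd_double_half (l - r);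
  by rewrite odd_lr /=; lia.
Qed.

Lemma row_real_coord_complex_coord n (x : 'rV[R]_n) : n = (r + 2 * m)%N ->
  \row_(l < n) real_coord (complex_coord x) l = x.
Proof.
move=> n_eq; apply/rowP => l; have lt_l : (l < r + 2 * m)%N by rewrite -n_eq.
by rewrite mxE real_coord_complex_coord // rcoord_ord.
Qed.

Lemma complex_coord_eq0 n (x : 'rV[R]_n) : n = (r + 2 * m)%N ->
  (forall j, (0 < j <= r + 2 * m)%N -> complex_coord x j = 0) -> x = 0.
Proof.
move=> n_eq x0; apply/rowP => l; have lt_l : (l < r + 2 * m)%N by rewrite -n_eq.
rewrite [RHS]mxE -rcoord_ord -real_coord_complex_coord // /real_coord.
have half_lr := odd_double_half (l - r).
case: ifP => [lt_lr | /negbT ge_lr]; first by rewrite x0 //; lia.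
by case: ifP => _; rewrite x0 //; lia.
Qed.

End RealCoordinates.

Section Surface.
Variables (R : realType) (r m : nat).

Definition surface_fun n (x : 'rV[R]_n) : R :=
  `| \prod_(j < r) rcoord x j | *
    \prod_(i < m) (rcoord x (r + 2 * i) ^+ 2 + rcoord x (r + 2 * i + 1) ^+ 2).

Lemma surface_funZ n (a : R) (x : 'rV[R]_n) :
  surface_fun (a *: x) = `|a| ^+ (r + 2 * m) * surface_fun x.
Proof.
rewrite /surface_fun; under eq_bigr do rewrite rcoordZ.
under [X in _ * X]eq_bigr do rewrite !rcoordZ !exprMn -mulrDr.
rewrite big_split /= big_split /= !prodr_const !card_ord normrM normrX.
have -> : (a ^+ 2) ^+ m = `|a| ^+ (2 * m) by rewrite exprM real_normK ?num_real.
by rewrite exprD mulrACA.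
Qed.

Lemma surface_fun_real_coord n (c : nat -> R[i]) : n = (r + 2 * m)%N ->
  conj_symmetric r m c ->
  surface_fun (\row_(l < n) real_coord r c l) * cabs (c 0%N) =
  \prod_(0 <= j < (r + 2 * m).+1) cabs (c j).
Proof.
move=> -> [c_real c_conj].
rewrite big_ltn // (big_nat_split_conj r m (@GRing.mul R : Monoid.com_law 1) (fun j => cabs (c j))).
rewrite mulrC /surface_fun /=; congr (_ * (_ * _)).
  rewrite normr_prod; apply: eq_bigr => l _; have lt_lr := ltn_ord l.
  rewrite rcoord_row ltn_addr // real_coord_real // cabs_real ?c_real //; lia.
apply: eq_bigr => k _; have lt_km := ltn_ord k.
rewrite !rcoord_row ifT ?ifT; try lia.
rewrite real_coord_even real_coord_odd -cabs_sqr -!addnS c_conj ?cabsJ ?expr2 //; lia.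
Qed.

End Surface.

Lemma inord0 n : inord 0 = ord0 :> 'I_n.+1.
Proof. exact/val_inj/inordK. Qed.

Local Open Scope classical_set_scope.

Section PowR.
Variable R : realType.

Lemma powR_invnK (n : nat) (a : R) : 0 <= a -> (0 < n)%N -> powR a n%:R^-1 ^+ n = a.
Proof.
move=> a_ge0 n_pos; rewrite -powR_mulrn ?powR_ge0 // -powRrM mulVf ?powRr1 //.
by rewrite pnatr_eq0 -lt0n.
Qed.

Lemma cvg_powR (e P : R) (G : nat -> R) : 0 < P ->
  G n @[n --> \oo] --> P -> powR (G n) e @[n --> \oo] --> powR P e.
Proof.
move=> P_pos G_P; have G_pos : \forall n \near \oo, 0 < G n := G_P _ (lt_nbhsr P_pos).
have powRE : \forall n \near \oo, expR (e * ln (G n)) = powR (G n) e.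
  by apply: filterS G_pos => n Gn_pos; rewrite /powR gt_eqF // mulrC.
apply: cvg_trans (near_eq_cvg powRE) _.
rewrite (_ : powR P e = expR (e * ln P)); last by rewrite /powR gt_eqF // mulrC.
have lnG : e * ln (G n) @[n --> \oo] --> e * ln P.
  by apply: cvgM; [exact: cvg_cst | exact: (continuous_cvg _ (continuous_ln P_pos) G_P)].
exact: (continuous_cvg _ (@continuous_expR R _) lnG).
Qed.

End PowR.

Section TraceVectors.
Variables (R : realType) (L : fieldExtType rat) (d r m : nat).
Variables (alpha : 'I_d -> L) (sigma : 'I_d.+1 -> {rmorphism L -> R[i]}).
Hypothesis d_eq : d = (r + 2 * m)%N.
Hypothesis alpha_basis : basis_of fullv (1 :: [seq alpha i | i <- enum 'I_d]).
Hypothesis sigma_distinct : forall i j, (forall x, sigma i x = sigma j x) -> i = j.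
Hypothesis sigma_real : forall (i : 'I_d.+1) x, (i <= r)%N -> complex.Im (sigma i x) = 0.
Hypothesis sigma_conj : forall (k : nat) x, (1 <= k <= m)%N ->
  sigma (inord (r + k)) x = conjc (sigma (inord (r + m + k)) x).

Let basis1 := 1 :: [seq alpha i | i <- enum 'I_d].

Lemma size_basis1 : size basis1 = d.+1.
Proof. by rewrite /= size_map size_enum_ord. Qed.

Lemma basis1_lift (l : 'I_d) : basis1`_(lift ord0 l) = alpha l.
Proof. by rewrite lift0 /= (nth_map l) ?size_enum_ord // nth_ord_enum. Qed.

Lemma dim_fullv : \dim (fullv : {vspace L}) = d.+1.
Proof. by rewrite -size_basis1 (size_basis (X := in_tuple basis1) alpha_basis). Qed.

Lemma mulr_vbasis (x : L) (i : 'I_(\dim (fullv : {vspace L}))) :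
  let e := vbasis fullv in x * e`_i = \sum_k passmx.mxof e e (amull x) i k *: e`_k.
Proof.
move=> e; have e_basis : basis_of fullv e := vbasisP fullv.
have := @passmx.rVof_app _ _ _ e e e_basis (amull x) e`_i.
rewrite (passmx.rVofE e_basis) -rowE lfunE /= => rVof_xe.
rewrite -[LHS](passmx.rVofK e_basis) rVof_xe /passmx.vecof.
by apply: eq_bigr => k _; rewrite mxE.
Qed.

Lemma ftrace_embeddings (x : L) : (ratr (ftrace x) : R[i]) = \sum_j sigma j x.
Proof.
apply: (trace_mulr_embeddings sigma_distinct (vbasisP fullv)) dim_fullv (mulr_vbasis x).
by rewrite size_tuple dim_fullv.
Qed.

Lemma fnorm_embeddings (x : L) : (ratr (fnorm x) : R[i]) = \prod_j sigma j x.
Proof.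
apply: (det_mulr_embeddings sigma_distinct (vbasisP fullv)) dim_fullv (mulr_vbasis x).
by rewrite size_tuple dim_fullv.
Qed.

Lemma lattice_basis1 (y : L) : in_lattice alpha y ->
  exists g : 'I_d.+1 -> int, y = \sum_k (g k)%:~R *: basis1`_k.
Proof.
case=> c0 [c ->]; exists (fun k => if unlift ord0 k is Some l then c l else c0).
rewrite big_ord_recl unlift_none (_ : basis1`_0 = 1) // scaler_int -mulrzl mulr1.
congr (_ + _).
by apply: eq_bigr => l _; rewrite liftK basis1_lift scaler_int mulrzl.
Qed.

Lemma basis1_in_lattice (k : 'I_d.+1) : in_lattice alpha basis1`_k.
Proof.
case: (unliftP ord0 k) => [l ->|->]; last first.
  by exists 1, (fun _ => 0); rewrite big1 ?addr0 // => j _; rewrite mul0r.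
rewrite basis1_lift; exists 0, (fun j => (j == l)%:R).
rewrite (bigD1 l) //= big1 ?eqxx ?add0r ?addr0 ?mul1r // => j /negPf ->.
by rewrite mul0r.
Qed.

Lemma prod_embeddings_int (u : L) :
  (forall y, in_lattice alpha y -> in_lattice alpha (u * y)) ->
  exists z : int, \prod_j sigma j u = z%:~R.
Proof.
move=> u_lattice.
have /choice[B u_B] (i : 'I_d.+1) :
    exists g : 'I_d.+1 -> int, u * basis1`_i = \sum_k (g k)%:~R *: basis1`_k.
  exact/lattice_basis1/u_lattice/basis1_in_lattice.
pose M : 'M[int]_d.+1 := \matrix_(i, k) B i k.
exists (\det M); apply/esym; rewrite -ratr_int -det_map_mx.
apply: (det_mulr_embeddings sigma_distinct alpha_basis size_basis1) => // i.
by rewrite u_B; apply: eq_bigr => k _; rewrite !mxE.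
Qed.

Lemma unit_ZL_prod_cabs (u : L) : unit_ZL alpha u -> \prod_j cabs (sigma j u) = 1.
Proof.
case=> [[_ u_lattice] [v [[_ v_lattice] uv1]]].
have [a u_a] := prod_embeddings_int u_lattice.
have [b v_b] := prod_embeddings_int v_lattice.
have ba1 : b * a = 1.
  apply/eqP; rewrite -(eqr_int R[i]) intrM -u_a -v_b -big_split /=.
  by apply/eqP/big1 => j _; rewrite mulrC -rmorphM uv1 rmorph1.
have /intUnitRing.unitzPl := ba1; rewrite qualifE /= => /orP[] /eqP a_pm1.
  by rewrite -cabs_prod u_a a_pm1 cabs1.
by rewrite -cabs_prod u_a a_pm1 cabsN cabs1.
Qed.

Definition embn (y : L) (j : nat) : R[i] := sigma (inord j) y.

Lemma embn0 y : embn y 0 = sigma ord0 y.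
Proof. by rewrite /embn inord0. Qed.

Definition alpha_gap (i : 'I_d) (j : nat) : R[i] :=
  sigma ord0 (alpha i) - sigma (inord j) (alpha i).

Definition Malpha : 'M[R]_d := \matrix_(l, i) dual_coord r (alpha_gap i) l.

Definition yvec (y : L) : 'rV[R]_d := \row_l real_coord r (embn y) l.

Lemma embn_conj_symmetric y : conj_symmetric r m (embn y).
Proof.
split=> [j j_small | k k_small]; first by apply: sigma_real; rewrite inordK; lia.
by rewrite /embn sigma_conj // conjcK.
Qed.

Lemma alpha_gap_conj_symmetric i : conj_symmetric r m (alpha_gap i).
Proof.
split=> [j j_small | k k_small].
  by rewrite /alpha_gap ImB !sigma_real ?subrr // inordK; lia.
by rewrite /alpha_gap rmorphB /= conj_Im0 ?sigma_real // sigma_conj // conjcK.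
Qed.

Lemma sum_embeddings (F : nat -> R[i]) :
  \sum_(j < d.+1) F j = F 0%N + \sum_(1 <= j < (r + 2 * m).+1) F j.
Proof. by rewrite -(big_mkord xpredT) big_ltn // d_eq. Qed.

Lemma sum_coordinates (F : nat -> R) : \sum_(l < d) F l = \sum_(l < r + 2 * m) F l.
Proof. by rewrite d_eq. Qed.

Lemma real_coord_mulmx (c : nat -> R[i]) i : conj_symmetric r m c ->
  (((\row_(l < d) real_coord r c l) *m Malpha) 0 i)%:C%C =
  \sum_(1 <= j < (r + 2 * m).+1) c j * alpha_gap i j.
Proof.
move=> c_sym; rewrite -(real_coord_pairing c_sym (alpha_gap_conj_symmetric i)) !mxE.
under eq_bigr do rewrite !mxE.
by rewrite (sum_coordinates (fun l => real_coord r c l * dual_coord r (alpha_gap i) l)).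
Qed.

Lemma yvec_mulmx y : yvec y *m Malpha =
  ratr (ftrace y) *: (\row_i complex.Re (sigma ord0 (alpha i)))
  - \row_i ratr (ftrace (y * alpha i)).
Proof.
apply/rowP => i; apply: complexI; rewrite (real_coord_mulmx _ (embn_conj_symmetric y)) !mxE.
rewrite real_complexD real_complexM raddfN /= !real_complex_ratr !ftrace_embeddings.
rewrite -Im0_Re ?sigma_real // mulr_suml -sumrB.
rewrite (eq_bigr (fun j : 'I_d.+1 => embn y j * alpha_gap i j)); last first.
  by move=> j _; rewrite /embn /alpha_gap inord_val rmorphM; ring.
rewrite (sum_embeddings (fun j => embn y j * alpha_gap i j)) /alpha_gap.
by rewrite inord0 subrr mulr0 add0r.
Qed.

Lemma alpha_gap_free (c : nat -> R[i]) :
  (forall i, \sum_(1 <= j < (r + 2 * m).+1) c j * alpha_gap i j = 0) ->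
  forall j, (0 < j <= r + 2 * m)%N -> c j = 0.
Proof.
move=> c_gap; pose S := \sum_(1 <= j < (r + 2 * m).+1) c j.
pose z j := if j == 0%N then - S else c j.
suff z0 (k : 'I_d.+1) : z k = 0.
  by move=> j j_small; have := z0 (inord j); rewrite /z inordK ?ifF //; [apply/negbTE | ]; lia.
move: k; apply: (dedekind_basis sigma_distinct alpha_basis size_basis1) => k lt_kd.
have -> : \sum_(j < d.+1) z j * sigma j basis1`_k =
          - S * sigma ord0 basis1`_k +
          \sum_(1 <= j < (r + 2 * m).+1) c j * sigma (inord j) basis1`_k.
  rewrite (eq_bigr (fun j : 'I_d.+1 => z j * sigma (inord j) basis1`_k)); last first.
    by move=> j _; rewrite inord_val.
  rewrite (sum_embeddings (fun j => z j * sigma (inord j) basis1`_k)) inord0.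
  congr (_ + _); apply: eq_big_nat => j /andP[j_pos _].
  by rewrite /z ifF //; lia.
have [-> | k_pos] := posnP k.
  rewrite rmorph1 mulr1; under eq_bigr do rewrite rmorph1 mulr1.
  exact: addNr.
have [l ->] : exists l : 'I_d, k = lift ord0 l.
  have lt_k1d : (k.-1 < d)%N by lia.
  by exists (Ordinal lt_k1d); rewrite lift0 /= prednK.
have := c_gap l; rewrite /alpha_gap; under eq_bigr do rewrite mulrBr.
rewrite sumrB -mulr_suml -/S basis1_lift => gap0.
by rewrite mulNr addrC -opprB gap0 oppr0.
Qed.

Lemma Malpha_unit : Malpha \in unitmx.
Proof.
rewrite -row_free_unit -kermx_eq0; apply/eqP.
suff ker0 (x : 'rV[R]_d) : x *m Malpha = 0 -> x = 0.
  by apply/row_matrixP => a; rewrite row0; apply: ker0; rewrite -row_mul mulmx_ker row0.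
move=> xM0; apply: (complex_coord_eq0 d_eq); apply: alpha_gap_free => i.
rewrite -(real_coord_mulmx _ (@complex_coord_conj_symmetric _ r m _ x)).
by rewrite (@row_real_coord_complex_coord _ r m _ x d_eq) xM0 mxE.
Qed.

Lemma ftrace0 : ftrace (0 : L) = 0.
Proof.
have := ftrace_embeddings 0; rewrite big1 => [/eqP | j _]; last exact: rmorph0.
by rewrite fmorph_eq0 => /eqP.
Qed.

Lemma prod_cabs_fnorm s : \prod_j cabs (sigma j s) = `|ratr (fnorm s) : R|.
Proof. by rewrite -cabs_prod -fnorm_embeddings -real_complex_ratr cabs_real. Qed.

Lemma surface_yvec y :
  surface_fun r m (yvec y) * cabs (sigma ord0 y) = \prod_j cabs (sigma j y).
Proof.
rewrite -embn0 (surface_fun_real_coord d_eq (embn_conj_symmetric y)) -d_eq big_mkord.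
by apply: eq_bigr => j _; rewrite /embn inord_val.
Qed.

Definition gamma_pow (s u : L) : R :=
  `|ratr (ftrace (s * u)) : R| * `|ratr (fnorm s) : R| / cabs (sigma ord0 (s * u)).

Definition gamma_of (s u : L) : R := powR (gamma_pow s u) d%:R^-1.

(* When [gamma_of s u] vanishes so does the left-hand side of the identity to be
   proved, and any point of the surface, such as [yvec 1], will do. *)
Definition beta_of (s u : L) : 'rV[R]_d :=
  if gamma_of s u == 0 then yvec 1
  else (gamma_of s u)^-1 *: (powR `|ratr (ftrace (s * u)) : R| d%:R^-1 *: yvec (s * u)).

Lemma gamma_pow_ge0 s u : 0 <= gamma_pow s u.
Proof. by rewrite divr_ge0 ?mulr_ge0 ?cabs_ge0. Qed.

Lemma gamma_of_eq0 s u :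
  gamma_of s u = 0 -> powR `|ratr (ftrace (s * u)) : R| d%:R^-1 = 0.
Proof.
rewrite /gamma_of => /eqP; rewrite powR_eq0 => /andP[G0 d_inv_neq0].
apply/eqP; rewrite powR_eq0 d_inv_neq0 andbT normr_eq0 fmorph_eq0.
move: G0; rewrite !mulf_eq0 invr_eq0 !normr_eq0 !fmorph_eq0 => /orP[/orP[// | ] | ].
  move=> /eqP fnorm0; have := fnorm_embeddings s; rewrite fnorm0 rmorph0 => /esym/eqP.
  rewrite prodf_seq_eq0 => /hasP[j _ /=]; rewrite fmorph_eq0 => /eqP->.
  by rewrite mul0r ftrace0.
by rewrite cabs_eq0 fmorph_eq0 => /eqP->; rewrite ftrace0.
Qed.

Lemma gamma_beta_of s u :
  powR `|ratr (ftrace (s * u)) : R| d%:R^-1 *: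
    (ratr (ftrace (s * u)) *: (\row_i complex.Re (sigma ord0 (alpha i)))
     - \row_i ratr (ftrace (s * u * alpha i))) =
  gamma_of s u *: (beta_of s u *m Malpha).
Proof.
rewrite -yvec_mulmx /beta_of; case: eqVneq => [g0 | g_neq0].
  by rewrite g0 gamma_of_eq0 // !scale0r.
by rewrite -!scalemxAl scalerA mulfV // scale1r.
Qed.

Lemma beta_of_surface s u : unit_ZL alpha u -> surface_fun r m (beta_of s u) = 1.
Proof.
move=> u_unit; rewrite /beta_of; case: eqVneq => [_ | g_neq0].
  have := surface_yvec 1; rewrite rmorph1 cabs1 mulr1 => ->.
  by apply: big1 => j _; rewrite rmorph1 cabs1.
have [d0 | d_pos] := posnP d.
  have [-> ->] : r = 0%N /\ m = 0%N by lia.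
  by rewrite /surface_fun !big_ord0 normr1 mulr1.
have G_neq0 : gamma_pow s u != 0.
  by apply: contra g_neq0 => /eqP G0; rewrite /gamma_of G0 powR0 // invr_eq0 pnatr_eq0 -lt0n.
have c_neq0 : cabs (sigma ord0 (s * u)) != 0.
  by apply: contra G_neq0 => /eqP c0; rewrite /gamma_pow c0 invr0 mulr0.
have surf_su : surface_fun r m (yvec (s * u)) =
    `|ratr (fnorm s) : R| / cabs (sigma ord0 (s * u)).
  apply: (mulIf c_neq0); rewrite surface_yvec divfK //.
  under eq_bigr do rewrite rmorphM cabsM.
  by rewrite big_split /= (unit_ZL_prod_cabs u_unit) mulr1 prod_cabs_fnorm.
rewrite !surface_funZ -d_eq surf_su normfV exprVn.
rewrite !(ger0_norm (powR_ge0 _ _)) !powR_invnK ?gamma_pow_ge0 ?normr_ge0 //.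
by rewrite [_ * (_ / _)]mulrA -/(gamma_pow s u) mulVf.
Qed.

Lemma trace_leading_bound s u (k : R) :
  (forall i : 'I_d.+1, i != ord0 -> cabs (sigma i u) <= k) ->
  `|cabs (sigma ord0 (s * u)) - `|ratr (ftrace (s * u)) : R| | <=
  \sum_(i < d.+1 | i != ord0) cabs (sigma i s) * k.
Proof.
move=> u_bounded; set T := \sum_(i < d.+1 | i != ord0) sigma i (s * u).
have qC : (ratr (ftrace (s * u)) : R)%:C%C = sigma ord0 (s * u) + T.
  by rewrite real_complex_ratr ftrace_embeddings (bigD1 ord0).
have q_T : `|ratr (ftrace (s * u)) : R| = cabs (sigma ord0 (s * u) + T).
  by rewrite -qC cabs_real.
have T_le : cabs T <= \sum_(i < d.+1 | i != ord0) cabs (sigma i s) * k.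
  apply: le_trans (cabs_sum _ _ _) _; apply: ler_sum => i i_neq0.
  by rewrite rmorphM cabsM ler_wpM2l ?cabs_ge0 ?u_bounded.
have := cabsD (sigma ord0 (s * u)) T; have := cabsD (sigma ord0 (s * u) + T) (- T).
rewrite addrK cabsN -q_T => h1 h2.
by rewrite ler_norml; apply/andP; split; lra.
Qed.

Lemma dominant_kappa_ge1 u : dominant alpha sigma r m u -> 1 <= kappa alpha sigma r m.
Proof.
case=> _ [t [t_gt1 [/andP[t_le kt_ge] _]]].
by rewrite -(ler_pM2r (lt_trans ltr01 t_gt1)) mul1r (le_trans t_le kt_ge).
Qed.

Lemma dominant_conj_bounded u : dominant alpha sigma r m u ->
  forall i : 'I_d.+1, i != ord0 -> cabs (sigma i u) <= kappa alpha sigma r m.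
Proof.
move=> u_dom i i_neq0; have kappa_ge1 := dominant_kappa_ge1 u_dom.
case: u_dom => _ [t [t_gt1 [_ u_small]]].
have i_pos : (0 < i)%N by rewrite lt0n; apply: contra i_neq0 => /eqP i0; apply/eqP/val_inj.
have /andP[_ le_kt] := u_small i i_pos; apply: le_trans le_kt _.
have t_pow_le1 : powR t (- d%:R^-1) <= 1.
  by rewrite -[leRHS](powRr0 t); apply: ler_powR; [lra | rewrite oppr_le0 invr_ge0].
by rewrite -[leRHS]mulr1 ler_wpM2l //; lra.
Qed.

Lemma trace_ratio_cvg s (un : nat -> L) : sigma ord0 s != 0 ->
  (forall n, dominant alpha sigma r m (un n)) ->
  rabs sigma (un n) @[n --> \oo] --> +oo ->
  `|ratr (ftrace (s * un n)) : R| / cabs (sigma ord0 (s * un n)) @[n --> \oo] --> (1 : R).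
Proof.
move=> s_neq0 un_dom un_oo; set c0 := cabs (sigma ord0 s).
set K := \sum_(i < d.+1 | i != ord0) cabs (sigma i s) * kappa alpha sigma r m.
have K_ge0 : 0 <= K.
  apply: sumr_ge0 => i _; rewrite mulr_ge0 ?cabs_ge0 //.
  exact: le_trans ler01 (dominant_kappa_ge1 (un_dom 0%N)).
have c0_pos : 0 < c0 by rewrite lt_def cabs_eq0 s_neq0 cabs_ge0.
apply/cvgrPdist_le => eps eps_pos.
have := proj1 (cvgryPge (fun n => rabs sigma (un n))) un_oo (K / (c0 * eps) + 1).
move=> un_large; near=> n.
have big_un : K / (c0 * eps) + 1 <= rabs sigma (un n) by near: n; exact: un_large.
have c_eq : cabs (sigma ord0 (s * un n)) = c0 * rabs sigma (un n) by rewrite rmorphM cabsM.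
have K_le : K <= eps * cabs (sigma ord0 (s * un n)).
  by rewrite c_eq mulrA [eps * c0]mulrC -ler_pdivrMl ?mulr_gt0 // mulrC; lra.
have c_pos : 0 < cabs (sigma ord0 (s * un n)).
  have A_ge0 : 0 <= K / (c0 * eps) by rewrite divr_ge0 // mulr_ge0 // ltW.
  by rewrite c_eq mulr_gt0 //; apply: lt_le_trans big_un; lra.
rewrite -[X in X - _](divff (lt0r_neq0 c_pos)) -mulrBl normrM normfV (gtr0_norm c_pos).
rewrite ler_pdivrMr //.
exact: le_trans (trace_leading_bound _ (dominant_conj_bounded (un_dom n))) K_le.
Unshelve. all: end_near.
Qed.

Lemma gamma_pow_cvg s (un : nat -> L) : ratr (fnorm s) != 0 :> R ->
  (forall n, dominant alpha sigma r m (un n)) ->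
  rabs sigma (un n) @[n --> \oo] --> +oo ->
  gamma_pow s (un n) @[n --> \oo] --> `|ratr (fnorm s) : R|.
Proof.
move=> N_neq0 un_dom un_oo.
have s_neq0 : sigma ord0 s != 0.
  rewrite -cabs_eq0; apply: contraNneq N_neq0 => c0.
  by rewrite -normr_eq0 -prod_cabs_fnorm (bigD1 ord0) //= c0 mul0r.
rewrite (eq_cvg _ _ (fun n => mulrAC _ _ _)).
apply: cvg_trans (cvgM (trace_ratio_cvg s_neq0 un_dom un_oo) (cvg_cst _)) _.
by rewrite mul1r.
Qed.

Lemma gamma_of_cvg s (un : nat -> L) :
  (forall n, dominant alpha sigma r m (un n)) ->
  rabs sigma (un n) @[n --> \oo] --> +oo ->
  gamma_of s (un n) @[n --> \oo] --> powR `|ratr (fnorm s) : R| d%:R^-1.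
Proof.
move=> un_dom un_oo; have [N0 | N_neq0] := eqVneq (ratr (fnorm s) : R) 0.
  rewrite /gamma_of /gamma_pow N0 normr0; under eq_fun do rewrite mulr0 mul0r.
  exact: cvg_cst.
by apply: cvg_powR; [rewrite normr_gt0 | exact: gamma_pow_cvg].
Qed.

End TraceVectors.

Theorem lemma11 (R : realType) (L : fieldExtType rat) (d r m : nat)
  (alpha : 'I_d -> L) (sigma : 'I_d.+1 -> {rmorphism L -> R[i]}) :
  (* d = r + 2m *)
  d = (r + 2 * m)%N ->
  (* 1, alpha_1, ..., alpha_d is a Q-basis of K *)
  basis_of fullv (1 :: [seq alpha i | i <- enum 'I_d]) ->
  (* sigma_0, ..., sigma_d are pairwise distinct embeddings K -> C *)
  (forall i j, (forall x, sigma i x = sigma j x) -> i = j) ->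
  (* sigma_0 (= id), ..., sigma_r are real *)
  (forall (i : 'I_d.+1) x, (i <= r)%N -> complex.Im (sigma i x) = 0) ->
  (* sigma_(r+1), ..., sigma_d are non-real *)
  (forall i : 'I_d.+1, (r < i)%N -> exists x, complex.Im (sigma i x) != 0) ->
  (* sigma_(r+k) = conj sigma_(r+m+k), 1 <= k <= m *)
  (forall (k : nat) x, (1 <= k <= m)%N ->
     sigma (inord (r + k)) x = conjc (sigma (inord (r + m + k)) x)) ->
  let avec : 'rV[R]_d := \row_i complex.Re (sigma ord0 (alpha i)) in
  exists M : 'M[R]_d, M \in unitmx /\
  forall s : L, in_dual alpha s ->
  exists (gamma : L -> R) (beta : L -> 'rV[R]_d),
    (forall u, unit_ZL alpha u ->
       let q : R := ratr (ftrace (s * u)) in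
       let p : 'rV[R]_d := \row_i ratr (ftrace (s * u * alpha i)) in
       powR `|q| (d%:R)^-1 *: (q *: avec - p) = gamma u *: (beta u *m M)
       /\ on_surface r m (beta u)) /\
    (forall un : nat -> L,
       (forall n, dominant alpha sigma r m (un n)) ->
       rabs sigma (un n) @[n --> \oo] --> +oo ->
       gamma (un n) @[n --> \oo] --> powR `|ratr (fnorm s) : R| (d%:R)^-1).
Proof.
(* Neither the non-reality of [sigma_(r+1), ..., sigma_d] nor [s \in Lambda^*]
   is used. *)
move=> d_eq alpha_basis sigma_distinct sigma_real _ sigma_conj avec.
exists (Malpha r alpha sigma).
split; first exact: (Malpha_unit d_eq alpha_basis sigma_distinct sigma_real sigma_conj).
move=> s _; exists (gamma_of sigma s), (beta_of r sigma s); split.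
  move=> u u_unit q p; split.
    exact: (gamma_beta_of d_eq alpha_basis sigma_distinct sigma_real sigma_conj).
  exact: (beta_of_surface d_eq alpha_basis sigma_distinct sigma_real sigma_conj).
move=> un un_dom un_oo.
exact: (gamma_of_cvg alpha_basis sigma_distinct).
Qed.
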